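(* Suppose $0<\delta<2$ and $U,\tilde U\in C^1(-1,-1+\delta]\cap C^0[-1,-1+\delta]$ satisfy $$(1-x^2)U'+2xU+\tfrac12U^2\ge(1-x^2)\tilde U'+2x\tilde U+\tfrac12\tilde U^2,\quad -1<x<-1+\delta.$$ Suppose also that one of the following holds: (i) $U(-1)\ge\tilde U(-1)>2$; (ii) $U(-1)=\tilde U(-1)=2$ and $\limsup_{x\to-1^+}\int_{-1+\delta}^x\frac{-2+U(s)}{1-s^2}\,ds<+\infty$. Then either $U>\tilde U$ in $(-1,-1+\delta)$, or there exists $\delta'\in(0,\delta)$ such that $U\equiv\tilde U$ in $(-1,-1+\delta')$. *)

From Stdlib Require Import Reals.
From Coquelicot Require Import Coquelicot.
Open Scope R_scope.

Definition cont_on (I : R -> Prop) (f : R -> R) : Prop :=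
  forall x, I x -> filterlim f (within I (locally x)) (locally (f x)).

Definition C1_on (I : R -> Prop) (f : R -> R) : Prop :=
  exists g : R -> R, cont_on I g /\
    forall x, I x ->
      filterlim (fun y => (f y - f x) / (y - x))
        (within (fun y => I y /\ y <> x) (locally x)) (locally (g x)).

From Stdlib Require Import Reals Lra Classical.
From Coquelicot Require Import Coquelicot.
Open Scope R_scope.

(* Put w = U - Ut. Subtracting the two Riccati expressions gives
   (1 - x^2) w' + (U + 2x) w >= w^2/2 >= 0, so w E is nondecreasing for the integrating factor
   E(x) = exp (int_m^x (U - 2)/(1 - s^2)) / (1 - x)^2, whose logarithmic derivative is
   (U + 2x)/(1 - x^2). Hence if w(x0) <= 0 then w <= 0 on (-1, x0]. Under either hypothesis the
   exponent is bounded above near -1 (in case (i) because U > 2 there), so E is bounded near -1.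
   A point x with w(x) < 0 would then give w(y) <= w(x) E(x) / sup E < 0 for all y near -1,
   contradicting w(-1) >= 0. So w vanishes near -1. *)

Definition clamp (a b x : R) : R := Rmax a (Rmin x b).

Lemma clamp_id a b x : a <= x <= b -> clamp a b x = x.
Proof. intros Hx; unfold clamp; rewrite Rmin_left, Rmax_right; lra. Qed.

Lemma clamp_range a b x : a <= b -> a <= clamp a b x <= b.
Proof. unfold clamp, Rmax, Rmin; intros; repeat destruct Rle_dec; lra. Qed.

Lemma clamp_dist a b x y : Rabs (clamp a b y - clamp a b x) <= Rabs (y - x).
Proof. unfold clamp, Rmax, Rmin, Rabs; repeat destruct Rle_dec; repeat destruct Rcase_abs; lra. Qed.

Lemma continuous_clamp a b x : continuous (clamp a b) x.
Proof.
  intros P [eps HP]; exists eps; intros y Hy; apply HP.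
  exact (Rle_lt_trans _ _ _ (clamp_dist a b x y) Hy).
Qed.

Lemma cont_on_clamp (f : R -> R) a b x :
  a <= b -> cont_on (fun t => a <= t <= b) f -> continuous (fun t => f (clamp a b t)) x.
Proof.
  intros Hab Hf.
  apply (filterlim_comp _ _ _ (clamp a b) f _ (within (fun t => a <= t <= b) (locally (clamp a b x)))).
  - intros P HP; change (locally x (fun t => P (clamp a b t))).
    apply (filter_imp (fun t => a <= clamp a b t <= b -> P (clamp a b t))).
    + intros t Ht; apply Ht, clamp_range, Hab.
    + exact (continuous_clamp a b x _ HP).
  - apply Hf, clamp_range, Hab.
Qed.

Lemma locally_open_interval a b x : a < x < b -> locally x (fun y => a < y < b).
Proof. exact (open_and _ _ (open_gt a) (open_lt b) x). Qed.

Lemma cont_on_at_right (I : R -> Prop) f a :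
  cont_on I f -> I a -> at_right a I -> filterlim f (at_right a) (locally (f a)).
Proof.
  intros Hf Ia HI P HP; change (locally a (fun y => a < y -> P (f y))).
  apply (filter_imp (fun y => (a < y -> I y) /\ (I y -> P (f y)))).
  - intros y [H1 H2] Hy; exact (H2 (H1 Hy)).
  - exact (@filter_and _ (locally a) _ _ _ HI (Hf a Ia P HP)).
Qed.

Lemma C1_on_ex_derive (I : R -> Prop) f x : C1_on I f -> locally x I -> ex_derive f x.
Proof.
  intros [g [_ Hg]] [d HI].
  assert (Ix : I x) by (apply HI, ball_center).
  exists (g x); apply is_derive_Reals; intros eps Heps.
  destruct (Hg x Ix (ball (g x) (mkposreal eps Heps)) (locally_ball _ _)) as [e He].
  assert (Hmin : 0 < Rmin e d) by (apply Rmin_pos; apply cond_pos).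
  exists (mkposreal _ Hmin); intros h Hh0 Hh; simpl in Hh.
  assert (Hball : forall r : posreal, Rabs h < r -> ball x r (x + h)).
  { intros r Hr; change (Rabs (x + h - x) < r); replace (x + h - x) with h by ring; exact Hr. }
  assert (Hxh : x + h <> x) by (intro E; apply Hh0; lra).
  assert (Hq := He (x + h) (Hball e (Rlt_le_trans _ _ _ Hh (Rmin_l e d)))
                  (conj (HI _ (Hball d (Rlt_le_trans _ _ _ Hh (Rmin_r e d)))) Hxh)).
  replace (x + h - x) with h in Hq by ring; exact Hq.
Qed.

Lemma ex_derive_of_C1_on_half_open (f : R -> R) a b x :
  C1_on (fun t => a < t <= b) f -> a < x < b -> ex_derive f x.
Proof.
  intros Hf Hx; apply (C1_on_ex_derive _ _ _ Hf).
  apply (filter_imp (fun y => a < y < b)); [intros; lra | apply locally_open_interval, Hx].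
Qed.

Lemma nondecreasing_of_derive_nonneg (f df : R -> R) a b :
  (forall x, a < x < b -> is_derive f x (df x)) ->
  (forall x, a < x < b -> 0 <= df x) ->
  forall x y, a < x -> x <= y -> y < b -> f x <= f y.
Proof.
  intros Hd Hpos x y Hx Hxy Hy.
  destruct (Req_dec x y) as [<- | Hne]; [lra|].
  destruct (MVT_gen f x y df) as [c [Hc Heq]];
    rewrite ?Rmin_left, ?Rmax_right in * by lra.
  - intros z Hz; apply Hd; lra.
  - intros z Hz; apply continuity_pt_filterlim.
    apply (ex_derive_continuous (V := R_NormedModule)); exists (df z); apply Hd; lra.
  - assert (0 <= df c) by (apply Hpos; lra); nra.
Qed.

Lemma filterlim_Rminus {T} {F : (T -> Prop) -> Prop} {FF : Filter F} (f g : T -> R) lf lg :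
  filterlim f F (locally lf) -> filterlim g F (locally lg) ->
  filterlim (fun x => f x - g x) F (locally (lf - lg)).
Proof.
  intros Hf Hg.
  apply (filterlim_comp_2 (H := locally (opp lg)) f (fun x => opp (g x)) plus Hf).
  - exact (filterlim_comp _ _ _ g opp F _ _ Hg (filterlim_opp lg)).
  - exact (filterlim_plus lf (opp lg)).
Qed.

Lemma nondecreasing_product_vanishes (w E : R -> R) a c B l :
  filterlim w (at_right a) (locally l) -> 0 <= l ->
  (forall x, a < x < c -> w x <= 0) ->
  (forall x, a < x < c -> 0 < E x <= B) ->
  (forall x y, a < x -> x <= y -> y < c -> w x * E x <= w y * E y) ->
  forall x, a < x < c -> w x = 0.
Proof.
  intros Hw Hl Hneg HE Hmono x Hx.
  apply Rle_antisym; [exact (Hneg x Hx)|]; apply Rnot_lt_le; intros Hlt.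
  destruct (HE x Hx) as [HEx HB].
  set (eps := - (w x * E x) / B).
  assert (Heps : 0 < eps) by (apply Rdiv_lt_0_compat; nra).
  assert (HepsB : eps * B = - (w x * E x)) by (unfold eps; field; lra).
  assert (Hnear : at_right a (fun y => - eps < w y /\ y < x)).
  { apply filter_and.
    - exact (Hw _ (open_gt (- eps) l ltac:(lra))).
    - change (locally a (fun y => a < y -> y < x)).
      apply (filter_imp (fun y => y < x)); [auto | exact (open_lt x a ltac:(lra))]. }
  assert (Hright : at_right a (fun y => a < y)) by (exists (mkposreal 1 Rlt_0_1); auto).
  destruct (filter_ex _ (filter_and _ _ Hnear Hright)) as [y [[Hy Hyx] Hay]].
  assert (Hprod := Hmono y x Hay ltac:(lra) ltac:(lra)).
  assert (Hwy := Hneg y ltac:(lra)).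
  destruct (HE y ltac:(lra)) as [HEy HBy].
  nra.
Qed.

(* [(u^2 - ut^2)/2 = u (u - ut) - (u - ut)^2/2]: subtracting the two Riccati expressions
   leaves a linear equation for [u - ut] with a nonnegative defect. *)
Lemma riccati_difference_ge (u ut du dut x : R) :
  (1 - x ^ 2) * du + 2 * x * u + / 2 * u ^ 2 >= (1 - x ^ 2) * dut + 2 * x * ut + / 2 * ut ^ 2 ->
  (1 - x ^ 2) * (du - dut) + (u + 2 * x) * (u - ut) >= / 2 * (u - ut) ^ 2.
Proof. intros H; nra. Qed.

Section Comparison.

Variables (m : R) (U Ut : R -> R).
Hypothesis m_range : -1 < m < 1.
Hypothesis U_C1 : C1_on (fun x => -1 < x <= m) U.
Hypothesis Ut_C1 : C1_on (fun x => -1 < x <= m) Ut.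
Hypothesis U_cont : cont_on (fun x => -1 <= x <= m) U.
Hypothesis Ut_cont : cont_on (fun x => -1 <= x <= m) Ut.
Hypothesis riccati_ge : forall x, -1 < x < m ->
  (1 - x ^ 2) * Derive U x + 2 * x * U x + / 2 * (U x) ^ 2
  >= (1 - x ^ 2) * Derive Ut x + 2 * x * Ut x + / 2 * (Ut x) ^ 2.

(* [U] is clamped to [[-1, m]] only so that the density is continuous on all of [(-1, 1)]. *)
Definition weight_density (s : R) : R := (-2 + U (clamp (-1) m s)) / (1 - s ^ 2).
Definition weight_exponent (x : R) : R := RInt weight_density m x.
Definition weight (x : R) : R := exp (weight_exponent x) / (1 - x) ^ 2.
Definition weighted_difference (x : R) : R := (U x - Ut x) * weight x.

Lemma weight_density_continuous x : -1 < x < 1 -> continuous weight_density x.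
Proof.
  intros Hx.
  apply (continuous_mult (fun s => -2 + U (clamp (-1) m s)) (fun s => / (1 - s ^ 2))).
  - apply (continuous_plus (fun _ => -2)); [apply continuous_const|].
    apply cont_on_clamp; [lra | exact U_cont].
  - apply continuous_Rinv_comp; [|nra].
    apply (ex_derive_continuous (V := R_NormedModule)); auto_derive; trivial.
Qed.

Lemma weight_exponent_derive x : -1 < x < 1 -> is_derive weight_exponent x (weight_density x).
Proof.
  intros Hx; apply (is_derive_RInt _ _ m); [|exact (weight_density_continuous x Hx)].
  apply (filter_imp (fun b => -1 < b < 1)); [|exact (locally_open_interval _ _ _ Hx)].
  intros b Hb; apply (RInt_correct (V := R_CompleteNormedModule)), ex_RInt_continuous.
  intros z Hz; apply weight_density_continuous.
  split; [apply (Rlt_le_trans _ (Rmin m b)) | apply (Rle_lt_trans _ (Rmax m b))];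
    unfold Rmin, Rmax in *; destruct Rle_dec; lra.
Qed.

Lemma weight_pos x : x < 1 -> 0 < weight x.
Proof. intros Hx; apply Rdiv_lt_0_compat; [apply exp_pos | nra]. Qed.

Lemma weight_le_exp x : x <= 0 -> weight x <= exp (weight_exponent x).
Proof.
  intros Hx; unfold weight.
  assert (Hexp := exp_pos (weight_exponent x)).
  apply (Rmult_le_reg_r ((1 - x) ^ 2)); [nra|].
  unfold Rdiv; rewrite Rmult_assoc, Rinv_l by nra; nra.
Qed.

Lemma weight_density_eq x : -1 <= x <= m -> weight_density x = (-2 + U x) / (1 - x ^ 2).
Proof. intros Hx; unfold weight_density; rewrite clamp_id by lra; reflexivity. Qed.

Lemma weighted_difference_derive x : -1 < x < m ->
  is_derive weighted_difference x (weight x / (1 - x ^ 2) *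
    ((1 - x ^ 2) * (Derive U x - Derive Ut x) + (U x + 2 * x) * (U x - Ut x))).
Proof.
  intros Hx.
  assert (HG := weight_exponent_derive x ltac:(lra)).
  unfold weighted_difference, weight; auto_derive.
  - repeat split; try (apply ex_derive_of_C1_on_half_open with (-1) m; assumption).
    + exists (weight_density x); exact HG.
    + nra.
  - change (Derive (fun y => weight_exponent y) x) with (Derive weight_exponent x).
    change (Derive (fun y => U y) x) with (Derive U x).
    change (Derive (fun y => Ut y) x) with (Derive Ut x).
    rewrite (is_derive_unique _ _ _ HG), weight_density_eq by lra.
    field; split; nra.
Qed.

Lemma weighted_difference_nondecreasing x y :
  -1 < x -> x <= y -> y < m -> weighted_difference x <= weighted_difference y.
Proof.
  apply (nondecreasing_of_derive_nonneg _ _ _ _ weighted_difference_derive).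
  intros z Hz.
  assert (Hw := weight_pos z ltac:(lra)).
  assert (Hd := riccati_difference_ge _ _ _ _ _ (riccati_ge z Hz)).
  assert (Hsq := pow2_ge_0 (U z - Ut z)).
  apply Rmult_le_pos; [apply Rdiv_le_0_compat; [lra | nra] | lra].
Qed.

Lemma difference_nonpos_left x0 x :
  -1 < x -> x <= x0 -> x0 < m -> U x0 <= Ut x0 -> U x <= Ut x.
Proof.
  intros Hx Hxx0 Hx0 Hle0.
  assert (Hmono := weighted_difference_nondecreasing x x0 Hx Hxx0 Hx0).
  assert (Hw := weight_pos x ltac:(lra)); assert (Hw0 := weight_pos x0 ltac:(lra)).
  unfold weighted_difference in Hmono; nra.
Qed.

Lemma weight_exponent_bounded_of_gt2 : U (-1) > 2 ->
  exists c K, -1 < c < m /\ forall x, -1 < x < c -> weight_exponent x <= K.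
Proof.
  intros HU2.
  destruct (U_cont (-1) ltac:(lra) _ (open_gt 2 (U (-1)) HU2)) as [eps Heps].
  set (b := -1 + Rmin eps (m + 1)).
  assert (Hb : -1 < b <= m) by (unfold b; assert (Hmin := Rmin_r eps (m + 1));
    assert (0 < Rmin eps (m + 1)) by (apply Rmin_pos; [apply cond_pos | lra]); lra).
  assert (Hdens : forall y, -1 < y < b -> 0 <= weight_density y).
  { intros y Hy; rewrite weight_density_eq by lra.
    assert (HUy : 2 < U y).
    { apply Heps; [|lra].
      change (Rabs (y - -1) < eps); rewrite Rabs_right by lra.
      assert (Hmin := Rmin_l eps (m + 1)); unfold b in Hy; lra. }
    apply Rdiv_le_0_compat; nra. }
  exists ((-1 + b) / 2), (weight_exponent ((-1 + b) / 2)); split; [lra|].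
  intros x Hx; apply (nondecreasing_of_derive_nonneg _ weight_density (-1) b); try lra.
  - intros z Hz; apply weight_exponent_derive; lra.
  - exact Hdens.
Qed.

Lemma weight_exponent_bounded_of_RInt_bounded :
  (exists M eta, 0 < eta /\ forall x, -1 < x < -1 + eta ->
     RInt (fun s => (-2 + U s) / (1 - s ^ 2)) m x <= M) ->
  exists c K, -1 < c < m /\ forall x, -1 < x < c -> weight_exponent x <= K.
Proof.
  intros [M [eta [Heta HM]]].
  assert (Hmin := Rmin_l eta (m + 1)); assert (Hmin' := Rmin_r eta (m + 1)).
  assert (0 < Rmin eta (m + 1)) by (apply Rmin_pos; lra).
  exists (-1 + Rmin eta (m + 1) / 2), M; split; [lra|].
  intros x Hx; unfold weight_exponent.
  rewrite (RInt_ext _ (fun s => (-2 + U s) / (1 - s ^ 2))); [apply HM; lra|].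
  intros s Hs; rewrite Rmin_right, Rmax_left in Hs by lra.
  apply weight_density_eq; lra.
Qed.

Lemma difference_vanishes_near_left x0 c K :
  Ut (-1) <= U (-1) -> -1 < x0 < m -> U x0 <= Ut x0 ->
  (forall x, -1 < x < c -> weight_exponent x <= K) ->
  forall x, -1 < x < Rmin (Rmin x0 c) 0 -> U x = Ut x.
Proof.
  intros HUUt Hx0 Hle0 HK x Hx.
  assert (Hmin1 := Rmin_l (Rmin x0 c) 0); assert (Hmin2 := Rmin_r (Rmin x0 c) 0).
  assert (Hmin3 := Rmin_l x0 c); assert (Hmin4 := Rmin_r x0 c).
  assert (Hright : at_right (-1) (fun y => -1 <= y <= m)).
  { change (locally (-1) (fun y => -1 < y -> -1 <= y <= m)).
    apply (filter_imp (fun y => y < m)); [intros; lra | apply open_lt; lra]. }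
  assert (Hlim : filterlim (fun y => U y - Ut y) (at_right (-1)) (locally (U (-1) - Ut (-1)))).
  { apply filterlim_Rminus; apply (cont_on_at_right (fun y => -1 <= y <= m)); auto; lra. }
  enough (U x - Ut x = 0) by lra.
  apply (nondecreasing_product_vanishes _ weight (-1) (Rmin (Rmin x0 c) 0) (exp K) _ Hlim);
    [lra | | | | exact Hx].
  - intros y Hy; apply Rle_minus, (difference_nonpos_left x0); lra.
  - intros y Hy; split; [apply weight_pos; lra|].
    apply (Rle_trans _ _ _ (weight_le_exp y ltac:(lra))).
    destruct (Rle_lt_or_eq_dec _ _ (HK y ltac:(lra))) as [Hlt | ->];
      [apply Rlt_le, exp_increasing, Hlt | apply Rle_refl].
  - intros y z Hy Hyz Hz; apply weighted_difference_nondecreasing; lra.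
Qed.

End Comparison.

Theorem lemma2p4 (delta : R) (U Ut : R -> R) :
  0 < delta < 2 ->
  C1_on (fun x => -1 < x <= -1 + delta) U ->
  C1_on (fun x => -1 < x <= -1 + delta) Ut ->
  cont_on (fun x => -1 <= x <= -1 + delta) U ->
  cont_on (fun x => -1 <= x <= -1 + delta) Ut ->
  (forall x, -1 < x < -1 + delta ->
     (1 - x ^ 2) * Derive U x + 2 * x * U x + / 2 * (U x) ^ 2
     >= (1 - x ^ 2) * Derive Ut x + 2 * x * Ut x + / 2 * (Ut x) ^ 2) ->
  ((U (-1) >= Ut (-1) /\ Ut (-1) > 2) \/
   (U (-1) = 2 /\ Ut (-1) = 2 /\
    (exists M eta : R, 0 < eta /\
       forall x, -1 < x < -1 + eta ->
         RInt (fun s => (-2 + U s) / (1 - s ^ 2)) (-1 + delta) x <= M))) ->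
  (forall x, -1 < x < -1 + delta -> U x > Ut x) \/
  (exists delta' : R, 0 < delta' < delta /\
     forall x, -1 < x < -1 + delta' -> U x = Ut x).
Proof.
  intros Hdelta HU1 HUt1 HU0 HUt0 Hineq Hcase.
  set (m := -1 + delta) in *.
  assert (Hm : -1 < m < 1) by (unfold m; lra).
  destruct (classic (forall x, -1 < x < m -> U x > Ut x)) as [Hgt | Hnot]; [left; exact Hgt | right].
  destruct (not_all_ex_not _ _ Hnot) as [x0 Hx0].
  apply imply_to_and in Hx0 as [Hx0 Hle0]; apply Rnot_gt_le in Hle0.
  assert (HUUt : Ut (-1) <= U (-1)) by (destruct Hcase as [[? ?] | [? [? ?]]]; lra).
  assert (Hbound : exists c K, -1 < c < m /\ forall x, -1 < x < c -> weight_exponent m U x <= K).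
  { destruct Hcase as [[_ H2] | [_ [_ HM]]].
    - apply weight_exponent_bounded_of_gt2; auto; lra.
    - apply weight_exponent_bounded_of_RInt_bounded; auto. }
  destruct Hbound as [c [K [Hc HK]]].
  assert (Hmin1 := Rmin_l (Rmin x0 c) 0); assert (Hmin2 := Rmin_l x0 c).
  assert (Hpos : -1 < Rmin (Rmin x0 c) 0) by (repeat apply Rmin_glb_lt; lra).
  exists (Rmin (Rmin x0 c) 0 + 1); split; [unfold m in *; lra|].
  intros x Hx; apply (difference_vanishes_near_left m U Ut) with x0 c K; auto; lra.
Qed.
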